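(* Assume (R), assume that for every $\nu=1,\dots,d$ the growth-of-sum-moment condition (M) holds with constant $C_\nu$ (for $\gamma=2$), and that $T\ge p$ and $p=o(T)$ if $0\le\eta\le1/2$, respectively $p^{2\eta}=o(T)$ if $\eta>1/2$. Then there is a constant $K$ such that for every $\delta>0$ \[ \mathbb P\big(\|\widehat{\mathbb B}_T-\mathbb B\|_F>\delta\big)\le\frac{K^2}{\delta^2}\Big(\sum_{\nu=1}^dC_\nu\Big)\frac pT. \]
   Context: Setting: the dimension $p=p_T$ may grow with $T$. Regressors $\mathbf x_t\in\mathbb R^p$, responses $\mathbf Y_t\in\mathbb R^d$ with $Y_t^{(\nu)}=\mathbf x_t^\top\boldsymbol\beta_\nu+\epsilon_t^{(\nu)}$, $t=1,\dots,T$, $\nu=1,\dots,d$; $\mathbb B=(\boldsymbol\beta_1,\dots,\boldsymbol\beta_d)\in\mathbb R^{p\times d}$. $\mathbb P,\mathbb E$ are conditional on the regressors. $\mathbb X_T=(\mathbf x_1,\dots,\mathbf x_T)^\top$ has full rank, $\mathbf Y_T^{(\nu)}=(Y_1^{(\nu)},\dots,Y_T^{(\nu)})^\top$, $\widehat{\boldsymbol\beta}_{T\nu}=(\mathbb X_T^\top\mathbb X_T)^{-1}\mathbb X_T^\top\mathbf Y_T^{(\nu)}$, $\widehat{\mathbb B}_T=(\widehat{\boldsymbol\beta}_{T1},\dots,\widehat{\boldsymbol\beta}_{Td})$, and $\|\cdot\|_F$ is the Frobenius norm. (R): regressors bounded; there exist positive definite $\Sigma_{\mathbf x}$, constants $\eta\ge0$,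 $C<\infty$ and a compact interval $A\subset(0,\infty)$, independent of $T,p$, with $\|T^{-1}\sum_t\mathbf x_t\mathbf x_t^\top-\Sigma_{\mathbf x}\|_2\le Cp^\eta/\sqrt T$ and $\operatorname{spec}(T^{-1}\mathbb X_T^\top\mathbb X_T)\subset A$. (M) for $\nu$: there are $C_\nu<\infty$ and $\gamma'\ge2$ with $\sup_{j\ge1}\mathbb E|\sum_{t=1}^Nx_{tj}\epsilon_t^{(\nu)}|^\gamma\le C_\nu N^{\gamma/2}$ for all $2\le\gamma\le\gamma'$, $N\in\mathbb N$. *)

From HB Require Import structures.
From mathcomp Require Import all_boot all_order all_algebra.
From mathcomp Require Import all_classical all_reals all_analysis.
Set Implicit Arguments. Unset Strict Implicit. Unset Printing Implicit Defensive.
Import Order.TTheory GRing.Theory Num.Theory.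
Local Open Scope ring_scope.
Local Open Scope classical_set_scope.

Definition vnorm (R : realType) (n : nat) (v : 'cV[R]_n) : R :=
  Num.sqrt (\sum_(i < n) v i ord0 ^+ 2).

Definition frob (R : realType) (m n : nat) (M : 'M[R]_(m, n)) : R :=
  Num.sqrt (\sum_(i < m) \sum_(j < n) M i j ^+ 2).

Definition opnorm2 (R : realType) (m n : nat) (M : 'M[R]_(m, n)) : R :=
  sup [set vnorm (M *m v) | v in [set v : 'cV[R]_n | vnorm v <= 1]].

Definition posdef (R : realType) (n : nat) (S : 'M[R]_n) : Prop :=
  S^T = S /\ forall v : 'cV[R]_n, v != 0 -> 0 < (v^T *m S *m v) ord0 ord0.

(* design matrix X_T = (x_1,...,x_T)^T, rows indexed by t = 0..T-1 *)
Definition design (R : realType) (T p : nat) (x : nat -> 'I_p -> R) : 'M[R]_(T, p) :=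
  \matrix_(t < T, j < p) x t j.

Definition ols (R : realType) (T p d : nat) (X : 'M[R]_(T, p)) (Y : 'M[R]_(T, d))
  : 'M[R]_(p, d) := invmx (X^T *m X) *m X^T *m Y.

From HB Require Import structures.
From mathcomp Require Import all_boot all_order all_algebra.
From mathcomp Require Import all_classical all_reals all_analysis.
From mathcomp Require Import measurable_realfun complex spectral sesquilinear ring.
Set Implicit Arguments. Unset Strict Implicit. Unset Printing Implicit Defensive.
Import Order.TTheory GRing.Theory Num.Theory numFieldNormedType.Exports.
Local Open Scope ring_scope.
Local Open Scope classical_set_scope.

(* With E the T x d matrix of errors, the OLS error is (X^T X)^-1 X^T E.
   The eigenvalues of X^T X are at least a T, so by the spectral theorem
   ||(X^T X)^-1 M||_F <= ||M||_F / (a T).  By (M), the expectation of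
   ||X^T E||_F^2 is at most p T (C_1 + ... + C_d), and Markov's inequality
   for ||X^T E||_F^2 gives the bound with K = 1/a. *)

Section HermitianFormBound.
Context {C : numClosedFieldType}.
Local Open Scope sesquilinear_scope.

Lemma cV_form_sum n (v : 'cV[C]_n) : (v ^t* *m v) 0 0 = \sum_i `|v i 0| ^+ 2.
Proof. by rewrite mxE; apply: eq_bigr => i _; rewrite !mxE normCKC. Qed.

Lemma unitarymx_form m n (M : 'M[C]_(m, n)) (y : 'cV[C]_m) :
  M \is unitarymx -> (M ^t* *m y) ^t* *m (M ^t* *m y) = y ^t* *m y.
Proof. by move=> uM; rewrite trmx_mul map_mxM trmxCK mulmxA mulmxtVK. Qed.

Lemma hermsymmx_trC n (A : 'M[C]_n) : A \is hermsymmx -> A ^t* = A.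
Proof. by move=> /is_hermitianmxP; rewrite expr0 scale1r => {2}->. Qed.

Lemma hermitian_eigenvalue_real n (A : 'M[C]_n) lam :
  A \is hermsymmx -> eigenvalue A lam -> lam \is Num.real.
Proof.
move=> /hermsymmx_trC AtE /eigenvalueP [v vA v0].
have vv0 : v *m v ^t* != 0.
  apply/eqP => vv0; have := dotmx_is_dotmx v0.
  by rewrite dotmxE vv0 mxE ltxx.
have : v *m A *m v ^t* = lam *: (v *m v ^t*) by rewrite vA scalemxAl.
have -> : v *m A *m v ^t* = v *m (v *m A) ^t* by rewrite trmx_mul map_mxM AtE mulmxA.
rewrite vA linearZ /= map_mxZ -scalemxAr => /eqP.
by rewrite -subr_eq0 -scalerBl scaler_eq0 (negPf vv0) orbF subr_eq0 -CrealE.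
Qed.

Lemma spectral_diag_eigenvalue n (A : 'M[C]_n) (k : 'I_n) :
  A \is normalmx -> eigenvalue A (spectral_diag A 0 k).
Proof.
move=> /orthomx_spectralP AE; have uP := spectral_unitarymx A.
rewrite invmx_unitary // in AE.
set P := spectralmx A in AE uP *; set D := spectral_diag A in AE *.
apply/eigenvalueP; exists (row k P).
  rewrite -row_mul AE !mulmxA (unitarymxP uP) mul1mx mul_diag_mx.
  by apply/rowP => j; rewrite !mxE.
apply: contraTneq isT => /(congr1 (fun r => r *m P ^t*)).
rewrite -row_mul (unitarymxP uP) mul0mx => /rowP /(_ k).
by rewrite !mxE eqxx => /eqP; rewrite oner_eq0.
Qed.

Lemma hermitian_form_ge n (A : 'M[C]_n) (c : C) :
  A \is hermsymmx -> 0 <= c -> (forall lam, eigenvalue A lam -> c <= lam) ->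
  forall v : 'cV_n, c ^+ 2 * (v ^t* *m v) 0 0 <= ((A *m v) ^t* *m (A *m v)) 0 0.
Proof.
move=> hA c0 eigA v; have /orthomx_spectralP AE := hermitian_normalmx hA.
have uP := spectral_unitarymx A.
rewrite invmx_unitary // in AE.
set P := spectralmx A in AE uP; set D := spectral_diag A in AE.
have -> : v ^t* *m v = (P *m v) ^t* *m (P *m v).
  rewrite -(unitarymx_form (P *m v) uP) [P ^t* *m _]mulmxA.
  by rewrite (mulmx1C (unitarymxP uP)) mul1mx.
have -> : A *m v = P ^t* *m (diag_mx D *m (P *m v)) by rewrite {1}AE !mulmxA.
rewrite unitarymx_form // !cV_form_sum mulr_sumr.
apply: ler_sum => k _; rewrite mul_diag_mx [in leRHS]mxE normrM exprMn.
have cD : c <= D 0 k by apply/eigA/spectral_diag_eigenvalue/hermitian_normalmx.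
rewrite ler_wpM2r ?exprn_ge0 // ger0_norm ?(le_trans c0) // !expr2.
exact: ler_pM.
Qed.

End HermitianFormBound.

Lemma unitmx_eigenvalue_ge (F : numFieldType) n (A : 'M[F]_n) (c : F) :
  0 < c -> (forall lam, eigenvalue A lam -> c <= lam) -> A \in unitmx.
Proof.
move=> c0 eigA; rewrite unitmxE unitfE; apply/negP => /det0P [v v0 vA].
have /eigA : eigenvalue A 0 by apply/eigenvalueP; exists v; rewrite // vA scale0r.
by move=> /(lt_le_trans c0); rewrite ltxx.
Qed.

Lemma eigenvalueZ (F : fieldType) n (A : 'M[F]_n) (k lam : F) :
  eigenvalue A lam -> eigenvalue (k *: A) (k * lam).
Proof.
move=> /eigenvalueP [v vA v0]; apply/eigenvalueP; exists v => //.
by rewrite -scalemxAr vA scalerA.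
Qed.

Section RealMatrices.
Variable R : realType.
Local Notation toC := (real_complex R).
Local Open Scope sesquilinear_scope.

Lemma conjC_real_complex (x : R) : (toC x)^* = toC x.
Proof. by rewrite conj_Creal ?complex_real. Qed.

Lemma form_map_real_complex n (u : 'cV[R]_n) :
  ((map_mx toC u) ^t* *m map_mx toC u) 0 0 = toC (\sum_i u i 0 ^+ 2).
Proof.
rewrite mxE rmorph_sum; apply: eq_bigr => i _.
by rewrite !mxE conjC_real_complex rmorphXn expr2.
Qed.

Lemma symmetric_eigenvalue_ge n (A : 'M[R]_n) (c : R) :
  A^T = A -> 0 <= c -> (forall lam, eigenvalue A lam -> c <= lam) ->
  forall u : 'cV_n, c ^+ 2 * \sum_i u i 0 ^+ 2 <= \sum_i (A *m u) i 0 ^+ 2.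
Proof.
(* The spectral theorem is only available over a numClosedFieldType. *)
move=> sA c0 eigA u; set Ac := map_mx toC A.
have hAc : Ac \is hermsymmx.
  apply/is_hermitianmxP; rewrite expr0 scale1r; apply/matrixP => i j.
  by rewrite !mxE conjC_real_complex -[in LHS]sA mxE.
have eigAc lam : eigenvalue Ac lam -> toC c <= lam.
  move=> eig_lam; have /complex_realP [r lamE] := hermitian_eigenvalue_real hAc eig_lam.
  rewrite lamE lecR; apply/eigA; rewrite -(eigenvalue_map toC).
  by rewrite lamE in eig_lam.
have c0C : 0 <= toC c by rewrite ler0c.
have := hermitian_form_ge hAc c0C eigAc (map_mx toC u).
by rewrite -map_mxM !form_map_real_complex -lecR rmorphM rmorphXn.
Qed.

Lemma sqr_frob m n (M : 'M[R]_(m, n)) : frob M ^+ 2 = \sum_i \sum_j M i j ^+ 2.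
Proof.
by rewrite sqr_sqrtr // sumr_ge0 // => i _; rewrite sumr_ge0 // => j _; rewrite sqr_ge0.
Qed.

Lemma frob_mulmx_ge m n (A : 'M[R]_n) (c : R) :
  A^T = A -> 0 <= c -> (forall lam, eigenvalue A lam -> c <= lam) ->
  forall M : 'M[R]_(n, m), c * frob M <= frob (A *m M).
Proof.
move=> sA c0 eigA M; rewrite /frob -[c in c * _](ger0_norm c0) -sqrtr_sqr.
rewrite -sqrtrM ?sqr_ge0 //; apply: ler_wsqrtr.
rewrite (exchange_big _ _ _ _ _ (fun i j => M i j ^+ 2)).
rewrite (exchange_big _ _ _ _ _ (fun i j => (A *m M) i j ^+ 2)) mulr_sumr.
apply: ler_sum => j _.
have sum_col (N : 'M[R]_(n, m)) : \sum_i col j N i 0 ^+ 2 = \sum_i N i j ^+ 2.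
  by apply: eq_bigr => i _; rewrite mxE.
by have := symmetric_eigenvalue_ge sA c0 eigA (col j M); rewrite colE mulmxA -!colE !sum_col.
Qed.

Lemma frob_invmx_mulmx_le m n (A : 'M[R]_n) (c : R) :
  A^T = A -> 0 < c -> (forall lam, eigenvalue A lam -> c <= lam) ->
  forall M : 'M[R]_(n, m), c * frob (invmx A *m M) <= frob M.
Proof.
move=> sA c0 eigA M; have uA := unitmx_eigenvalue_ge c0 eigA.
by have := frob_mulmx_ge sA (ltW c0) eigA (invmx A *m M); rewrite mulKVmx.
Qed.

Lemma ols_sub n p d (X : 'M[R]_(n, p)) (Bm : 'M[R]_(p, d)) (E : 'M[R]_(n, d)) :
  X^T *m X \in unitmx -> ols X (X *m Bm + E) - Bm = invmx (X^T *m X) *m (X^T *m E).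
Proof.
move=> uS; rewrite /ols mulmxDr [_ *m (X *m Bm)]mulmxA -[invmx _ *m _ *m X]mulmxA.
by rewrite mulVmx // mul1mx -mulmxA addrAC subrr add0r.
Qed.

End RealMatrices.

Section OLSErrorTail.
Context d (Omega : measurableType d) (R : realType).
Variable mu : {measure set Omega -> \bar R}.
Local Open Scope ereal_scope.

Lemma measurable_mulmx_entry m n k (K : 'M[R]_(m, n)) (M : Omega -> 'M[R]_(n, k)) :
  (forall i j, measurable_fun setT (fun w => M w i j)) ->
  forall i j, measurable_fun setT (fun w => (K *m M w) i j).
Proof.
move=> mM i j; under eq_fun do rewrite mxE.
by apply: measurable_sum => l; exact: measurable_funM.
Qed.

Lemma measurable_frob m n (M : Omega -> 'M[R]_(m, n)) :
  (forall i j, measurable_fun setT (fun w => M w i j)) ->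
  measurable_fun setT (fun w => frob (M w)).
Proof.
move=> mM; rewrite /frob.
apply: (measurableT_comp (continuous_measurable_fun (@sqrt_continuous R))).
by apply: measurable_sum => i; apply: measurable_sum => j; exact: measurable_funX.
Qed.

Lemma cst_mul_measure_le_integral (A : set Omega) (f : Omega -> R) (c : R) :
  measurable A -> measurable_fun setT f -> (forall w, 0 <= f w)%R ->
  (0 <= c)%R -> (forall w, A w -> c <= f w)%R ->
  c%:E * mu A <= \int[mu]_w (f w)%:E.
Proof.
move=> mA mf f0 c0 cf.
have mfE : measurable_fun setT (fun w => (f w)%:E) by exact/measurable_EFinP.
have f0E w : setT w -> 0 <= (f w)%:E by rewrite lee_fin.
rewrite -integral_cst //.
apply: le_trans _ (ge0_subset_integral mu mA measurableT mfE f0E (subsetT A)).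
by apply: ge0_le_integral => //; exact: measurable_funTS.
Qed.

Lemma integral_sqr_frob_le m n (M : Omega -> 'M[R]_(m, n)) (s : 'I_m -> 'I_n -> R) :
  (forall i j, measurable_fun setT (fun w => M w i j)) ->
  (forall i j, \int[mu]_w ((M w i j) ^+ 2)%:E <= (s i j)%:E) ->
  \int[mu]_w (frob (M w) ^+ 2)%:E <= (\sum_i \sum_j s i j)%:E.
Proof.
move=> mM Ms; under eq_integral => w _ do rewrite sqr_frob -sumEFin.
have mX i j : measurable_fun setT (fun w => M w i j ^+ 2)%R by exact: measurable_funX.
rewrite ge0_integral_sum // => [|i|i w _]; first last.
- by rewrite lee_fin sumr_ge0 // => j _; rewrite sqr_ge0.
- by apply/measurable_EFinP; exact: measurable_sum.
rewrite -sumEFin; apply: lee_sum => i _.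
under eq_integral => w _ do rewrite -sumEFin.
rewrite ge0_integral_sum // => [|j|j w _]; first last.
- by rewrite lee_fin sqr_ge0.
- exact/measurable_EFinP.
by rewrite -sumEFin; apply: lee_sum => j _.
Qed.

Lemma ols_error_tail_le n p k (X : 'M[R]_(n, p)) (Bm : 'M[R]_(p, k))
    (E : Omega -> 'M[R]_(n, k)) (s : 'I_p -> 'I_k -> R) (c delta : R) :
  (forall t j, measurable_fun setT (fun w => E w t j)) ->
  (0 < c)%R -> (forall lam, eigenvalue (X^T *m X) lam -> c <= lam)%R ->
  (forall i j, \int[mu]_w (((X^T *m E w) i j) ^+ 2)%:E <= (s i j)%:E) ->
  (0 < delta)%R ->
  mu [set w | delta < frob (ols X (X *m Bm + E w) - Bm)]%R
    <= (((delta * c) ^+ 2)^-1 * \sum_i \sum_j s i j)%:E.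
Proof.
move=> mE c_gt0 eigS Es delta_gt0; set S := X^T *m X.
have sS : S^T = S by rewrite trmx_mul trmxK.
have uS : S \in unitmx := unitmx_eigenvalue_ge c_gt0 eigS.
under eq_set do rewrite ols_sub //.
set A := [set w | _].
have mXE := measurable_mulmx_entry X^T mE.
have mA : measurable A.
  rewrite /A -[X in measurable X]setTI -preimage_itvoy.
  exact: measurable_frob (measurable_mulmx_entry _ mXE) _ _ (measurable_itv _).
have ge_on_A w : A w -> ((delta * c) ^+ 2 <= frob (X^T *m E w) ^+ 2)%R.
  move=> /ltW Aw; have dc_ge0 : (0 <= delta * c)%R by rewrite mulr_ge0 ?ltW.
  rewrite ler_sqr ?nnegrE ?sqrtr_ge0 //.
  apply: le_trans _ (frob_invmx_mulmx_le sS c_gt0 eigS (X^T *m E w)).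
  by rewrite mulrC ler_pM2l.
have mass_le := cst_mul_measure_le_integral mA
  (measurable_funX 2 (measurable_frob mXE)) (fun w => sqr_ge0 _) (sqr_ge0 _) ge_on_A.
rewrite EFinM lee_pdivlMl ?exprn_gt0 ?mulr_gt0 //.
exact: le_trans mass_le (integral_sqr_frob_le mXE Es).
Qed.

End OLSErrorTail.

Theorem corollary1 (R : realType) (dsp : measure_display) (Omega : measurableType dsp)
  (P : probability Omega R) (d : nat) (p : nat -> nat)
  (x : forall T : nat, nat -> 'I_(p T) -> R)
  (B : forall T : nat, 'M[R]_(p T, d))
  (eps : nat -> 'I_d -> Omega -> R)
  (Sigma : forall T : nat, 'M[R]_(p T))
  (eta Cr a b Cx : R) (C : 'I_d -> R) :
  (* (R) *)
  (forall T t j, `|x T t j| <= Cx) ->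
  (forall T, posdef (Sigma T)) ->
  0 <= eta -> 0 < a -> a <= b ->
  (forall T : nat, (0 < T)%N ->
     opnorm2 ((T%:R)^-1 *: ((design T (x T))^T *m design T (x T)) - Sigma T)
       <= Cr * (p T)%:R `^ eta / Num.sqrt T%:R) ->
  (forall T : nat, (0 < T)%N -> forall lam : R,
     eigenvalue ((T%:R)^-1 *: ((design T (x T))^T *m design T (x T))) lam ->
     a <= lam <= b) ->
  (forall T : nat, (0 < T)%N -> \rank (design T (x T)) = p T) ->
  (* errors are random variables *)
  (forall t nu, measurable_fun setT (eps t nu)) ->
  (* (M) with gamma = 2, for every nu *)
  (forall T : nat, (0 < T)%N -> forall (nu : 'I_d) (j : 'I_(p T)) (N : nat),
     (\int[P]_w ((`|\sum_(t < N) x T t j * eps t nu w| ^+ 2)%:E)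
        <= (C nu * N%:R)%:E)%E) ->
  (* growth conditions *)
  (forall T : nat, (0 < T)%N -> (p T <= T)%N) ->
  (eta <= 2^-1 -> (fun T : nat => (p T)%:R / T%:R : R) @ \oo --> (0 : R)) ->
  (2^-1 < eta -> (fun T : nat => (p T)%:R `^ (2 * eta) / T%:R : R) @ \oo --> (0 : R)) ->
  exists K : R, forall T : nat, (0 < T)%N -> forall delta : R, 0 < delta ->
    (P [set w | (delta < frob (ols (design T (x T))
                   (\matrix_(t < T, nu < d) (\sum_(j < p T) x T t j * B T j nu + eps t nu w))
                   - B T))%R]
      <= (K ^+ 2 / delta ^+ 2 * (\sum_(nu < d) C nu) * ((p T)%:R / T%:R))%:E)%E.
Proof.
(* The bound is non-asymptotic: only the lower eigenvalue bound a, the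
   measurability of the errors and (M) are used. *)
move=> _ _ _ a_gt0 _ _ Heig _ meps HM _ _ _.
exists a^-1 => T T_gt0 delta delta_gt0.
set X := design T (x T).
pose E w : 'M[R]_(T, d) := \matrix_(t, nu) eps t nu w.
have mE t nu : measurable_fun setT (fun w => E w t nu).
  by under eq_fun do rewrite mxE; exact: meps.
have aT_gt0 : 0 < a * T%:R by rewrite mulr_gt0 // ltr0n.
have eigS lam : eigenvalue (X^T *m X) lam -> a * T%:R <= lam.
  move=> /(eigenvalueZ T%:R^-1) /(Heig T T_gt0) /andP[+ _].
  by rewrite ler_pdivlMl ?ltr0n // mulrC.
have entryE w j nu : (X^T *m E w) j nu ^+ 2 = `|\sum_(t < T) x T t j * eps t nu w| ^+ 2.
  by rewrite real_normK ?num_real // mxE; congr (_ ^+ 2); apply: eq_bigr => t _; rewrite !mxE.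
have moment j nu : (\int[P]_w ((X^T *m E w) j nu ^+ 2)%:E <= (C nu * T%:R)%:E)%E.
  by under eq_integral do rewrite entryE; exact: HM.
have YE w : \matrix_(t < T, nu < d) (\sum_(j < p T) x T t j * B T j nu + eps t nu w)
    = X *m B T + E w.
  by apply/matrixP => t nu; rewrite !mxE; congr (_ + _); apply: eq_bigr => j _; rewrite !mxE.
under eq_set do rewrite YE.
have -> : a^-1 ^+ 2 / delta ^+ 2 * (\sum_(nu < d) C nu) * ((p T)%:R / T%:R)
    = ((delta * (a * T%:R)) ^+ 2)^-1 * \sum_(j < p T) \sum_(nu < d) C nu * T%:R.
  rewrite sumr_const card_ord -mulr_suml mulr_natl; field.
  by rewrite pnatr_eq0 -lt0n T_gt0 !gt_eqF.
exact: ols_error_tail_le.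
Qed.
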